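(* Let $p\ge1$, $\phi_1,\dots,\phi_p:\mathbb Z\to\mathbb C$, and let $H(t,s)$ be the Green's function of $y_t=\sum_{l=1}^p\phi_l(t)y_{t-l}$. Then $H(t,s)=\xi_{t,s}$ for all integers $s$ and $t\ge s-p+1$. In particular, for $t>s$, $H(t,s)$ is the determinant of the $(t-s)\times(t-s)$ banded lower Hessenberg matrix whose $(i,j)$ entry is $-1$ if $j=i+1$, $\phi_{i-j+1}(s+i)$ if $1\le i-j+1\le p$, and $0$ otherwise.
   Context: For $t\in\mathbb Z$ let $\Gamma_t$ be the $p\times p$ companion matrix with first row $(\phi_1(t),\dots,\phi_p(t))$, entries $(i,i-1)$ equal to $1$ for $2\le i\le p$, and all other entries $0$. For $t>s$, $F_{t,s}=\Gamma_t\Gamma_{t-1}\cdots\Gamma_{s+1}$ and the Green's function $H(t,s)$ is the $(1,1)$ entry of $F_{t,s}$; by convention $H(s,s)=1$ and $H(t,s)=0$ for $s-p+1\le t<s$. Convention: $\phi_l=0$ for $l>p$. For $t>s$, $\Phi_{t,s}$ is the $(t-s)\times(t-s)$ matrix with $(i,j)$ entry $-1$ if $j=i+1$, $\phi_{i-j+1}(s+i)$ if $1\le j\le i$, $0$ if $j>i+1$; the principal determinant is $\xi_{t,s}=\det\Phi_{t,s}$ for $t>s$, $\xi_{s,s}=1$, and $\xi_{t,s}=0$ for $s-p+1\le t<s$. *)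

(* Complex numbers are modelled as R[i] for R : realType. *)
From mathcomp Require Import all_boot all_order all_algebra.
From mathcomp Require Export reals complex.
Set Implicit Arguments. Unset Strict Implicit. Unset Printing Implicit Defensive.
Import Order.TTheory GRing.Theory Num.Theory.
Local Open Scope ring_scope.

Section Green.
Variable C : comNzRingType.
(* order p >= 1; coefficient functions phi l : int -> C for 1 <= l <= p
   (values of phi at l = 0 or l > p are ignored). *)
Variable p : nat.
Variable phi : nat -> int -> C.

Definition phic (l : nat) (t : int) : C :=
  if (1 <= l <= p)%N then phi l t else 0.

(* Companion matrix Gamma_t, of size p (written p.-1.+1, = p since p >= 1).
   0-indexed: row 0 is (phi_1(t), ..., phi_p(t)); entries (i, i-1) are 1. *)
Definition Gamma (t : int) : 'M[C]_(p.-1.+1) :=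
  \matrix_(i, j) (if i == 0%N :> nat then phic j.+1 t
                  else if i == j.+1 :> nat then 1 else 0).

Definition Fmat (t s : int) : 'M[C]_(p.-1.+1) :=
  \prod_(k < `|t - s|%N) Gamma (t - k%:Z).

(* Green's function H(t,s): (1,1) entry of F_{t,s} for t > s; H(s,s) = 1;
   0 for t < s (the paper only specifies s-p+1 <= t < s). *)
Definition Green (t s : int) : C :=
  if s < t then Fmat t s 0 0 else if t == s then 1 else 0.

(* Phi_{t,s}, (t-s) x (t-s); 0-indexed (i,j) corresponds to the paper's
   (i+1, j+1): -1 if j = i+1, phi_{i-j+1}(s+i+1) if j <= i, 0 otherwise. *)
Definition Phimat (t s : int) : 'M[C]_(`|t - s|%N) :=
  \matrix_(i, j) (if j == i.+1 :> nat then -1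
                  else if (j <= i)%N then phic (i - j).+1 (s + (i.+1)%:Z)
                  else 0).

Definition xi (t s : int) : C :=
  if s < t then \det (Phimat t s) else if t == s then 1 else 0.

End Green.

From mathcomp Require Import all_boot all_order all_algebra.
From mathcomp Require Import reals complex.
From mathcomp Require Import zify.

(* Expanding the banded lower Hessenberg determinant along its last column
   shows that xi_{t,s} obeys the difference equation
   xi_{t,s} = sum_l phi_l(t) xi_{t-l,s} for t > s.  Since F_{t,s} =
   Gamma_t F_{t-1,s}, the first column (F_{t,s})_{j,0} obeys the same
   recursion in t (row 0) or is shifted down from column 0 of F_{t-1,s}
   (rows j > 0); with the same initial values at t = s, induction on t - s
   gives (F_{t,s})_{j,0} = xi_{t-j,s}, and j = 0 is the theorem. *)

Set Implicit Arguments.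
Unset Strict Implicit.
Unset Printing Implicit Defensive.

Import Order.TTheory GRing.Theory Num.Theory.
Local Open Scope ring_scope.

Lemma big_ord_widen_zero (R : nmodType) m n (F : nat -> R) :
  (m <= n)%N -> (forall k, (m <= k < n)%N -> F k = 0) ->
  \sum_(k < m) F k = \sum_(k < n) F k.
Proof.
move=> le_mn F0; rewrite (big_ord_widen n F le_mn) big_mkcond /=.
by apply: eq_bigr => k _; case: ltnP => // le_mk; rewrite F0 // le_mk ltn_ord.
Qed.

Section LowerHessenberg.
Variables (R : comNzRingType) (a : nat -> nat -> R).
Hypothesis a_superdiag : forall i, a i i.+1 = -1.
Hypothesis a_above : forall i j, (i.+1 < j)%N -> a i j = 0.

Definition hessmx n : 'M[R]_n := \matrix_(i, j) a i j.

Definition hessmx_lastrow n (b : nat -> R) : 'M[R]_n.+1 :=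
  \matrix_(i, j) (if i == n :> nat then b j else a i j).

(* Along the last column only the corner entry and the superdiagonal [-1] of
   row [n - 1] survive; the minor of the latter again has this shape. *)
Lemma det_hessmx_lastrow n b :
  \det (hessmx_lastrow n b) = \sum_(r < n.+1) b r * \det (hessmx r).
Proof.
elim: n b => [|n IHn] b.
  by rewrite (expand_det_col _ ord_max) !big_ord1 /cofactor !mxE !det_mx00 !mulr1.
rewrite (expand_det_col _ ord_max) big_ord_recr /= big_ord_recr /=.
rewrite big1 ?add0r; last first.
  move=> i _; rewrite !mxE /= (ltn_eqF (ltn_trans (ltn_ord i) (ltnSn n))).
  by rewrite a_above ?mul0r // !ltnS.
have minor_last : row' ord_max (col' ord_max (hessmx_lastrow n.+1 b)) = hessmx n.+1.
  by apply/matrixP => i j; rewrite !mxE !lift_max /= (ltn_eqF (ltn_ord i)).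
have minor_prev : row' (widen_ord (leqnSn n.+1) ord_max)
                    (col' ord_max (hessmx_lastrow n.+1 b)) = hessmx_lastrow n b.
  apply/matrixP => i j; rewrite !mxE lift_max /= /bump /=.
  have [le_ni|lt_in] := leqP n i.
    have -> : nat_of_ord i = n by apply/eqP; rewrite eqn_leq le_ni -ltnS ltn_ord.
    by rewrite add1n !eqxx.
  by rewrite add0n (ltn_eqF lt_in) (ltn_eqF (ltn_trans lt_in (ltnSn _))).
rewrite /cofactor minor_last minor_prev IHn !mxE /= (ltn_eqF (ltnSn n)).
rewrite a_superdiag eqxx.
rewrite -[(-1) ^+ (n + _)]signr_odd -[(-1) ^+ (n.+1 + _)]signr_odd.
rewrite addnS !addnn /= !odd_double /=.
by rewrite expr1 expr0 !mulN1r mul1r opprK [RHS]big_ord_recr.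
Qed.

Lemma det_hessmxS n :
  \det (hessmx n.+1) = \sum_(r < n.+1) a n r * \det (hessmx r).
Proof.
rewrite -det_hessmx_lastrow; congr (\det _).
by apply/matrixP => i j; rewrite !mxE; case: eqP => // ->.
Qed.

End LowerHessenberg.

Section GreenDeterminant.
Variables (C : comNzRingType) (p : nat) (phi : nat -> int -> C) (s : int).

Definition Phi_entry (i j : nat) : C :=
  if j == i.+1 then -1
  else if (j <= i)%N then phic p phi (i - j).+1 (s + (i.+1)%:Z) else 0.

Lemma Phimat_hessmx t : Phimat p phi t s = hessmx Phi_entry `|t - s|.
Proof. by []. Qed.

Lemma xi_hessmx n : xi p phi (s + n%:Z) s = \det (hessmx Phi_entry n).
Proof.
rewrite /xi Phimat_hessmx addrAC subrr add0r absz_nat.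
by case: n => [|n]; rewrite ?addr0 ?ltxx ?eqxx ?det_mx00 // ltrDl ltz_nat.
Qed.

Lemma xi_lt t : t < s -> xi p phi t s = 0.
Proof. by move=> lt_ts; rewrite /xi ltNge (ltW lt_ts) (lt_eqF lt_ts). Qed.

Lemma xi_recursion n :
  xi p phi (s + (n.+1)%:Z) s =
  \sum_(k < p) phic p phi k.+1 (s + (n.+1)%:Z) * xi p phi (s + n%:Z - k%:Z) s.
Proof.
pose f k := phic p phi k.+1 (s + (n.+1)%:Z) * xi p phi (s + n%:Z - k%:Z) s.
change (xi p phi (s + (n.+1)%:Z) s = \sum_(k < p) f k).
rewrite (big_ord_widen_zero (F := f) (leq_addr n.+1 p)); last first.
  by move=> k /andP[le_pk _]; rewrite /f /phic (leq_gtF le_pk) andbF mul0r.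
rewrite -(big_ord_widen_zero (F := f) (leq_addl p n.+1)); last first.
  by move=> k /andP[lt_nk _]; rewrite /f xi_lt ?mulr0 //; lia.
rewrite xi_hessmx det_hessmxS; first last.
- by move=> i j lt_ij; rewrite /Phi_entry gtn_eqF // leqNgt (ltn_trans _ lt_ij).
- by move=> i; rewrite /Phi_entry eqxx.
rewrite (reindex_inj rev_ord_inj); apply: eq_bigr => k _ /=; rewrite subSS.
have le_kn : (k <= n)%N by rewrite -ltnS.
have lt_nk_Sn : (n - k < n.+1)%N by rewrite ltnS leq_subr.
rewrite /f {1}/Phi_entry (ltn_eqF lt_nk_Sn) leq_subr subKn //.
by rewrite (_ : s + n%:Z - k%:Z = s + (n - k)%:Z) ?xi_hessmx //; lia.
Qed.

Lemma Fmat_prod n :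
  Fmat p phi (s + n%:Z) s = \prod_(k < n) Gamma p phi (s + n%:Z - k%:Z).
Proof. by rewrite /Fmat addrAC subrr add0r absz_nat. Qed.

Lemma FmatS n :
  Fmat p phi (s + (n.+1)%:Z) s =
  Gamma p phi (s + (n.+1)%:Z) * Fmat p phi (s + n%:Z) s.
Proof.
rewrite !Fmat_prod big_ord_recl subr0; congr (_ * _).
by apply: eq_bigr => k _; rewrite lift0; congr (Gamma _ _ _); lia.
Qed.

Hypothesis p_gt0 : (0 < p)%N.

Lemma Fmat_col0 n (j : 'I_p.-1.+1) :
  Fmat p phi (s + n%:Z) s j 0 = xi p phi (s + n%:Z - j%:Z) s.
Proof.
elim: n j => [|n IHn] [[|j] lt_jp].
- by rewrite Fmat_prod big_ord0 addr0 !mxE subr0 /xi ltxx eqxx.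
- by rewrite Fmat_prod big_ord0 addr0 !mxE xi_lt // ltrBlDr ltrDl.
- rewrite FmatS -mulmxE mxE subr0 xi_recursion.
  under eq_bigr => k _ do rewrite IHn !mxE /=.
  by rewrite prednK.
- rewrite FmatS -mulmxE mxE.
  have lt_j : (j < p.-1.+1)%N := ltn_trans (ltnSn j) lt_jp.
  rewrite (bigD1 (Ordinal lt_j)) //= big1 => [|k ne_kj]; rewrite !mxE /=.
    by rewrite eqxx mul1r addr0 IHn /=; congr (xi _ _ _ _); lia.
  by move: ne_kj; rewrite -val_eqE eqSS eq_sym /= => /negbTE ->; rewrite mul0r.
Qed.

Lemma Green_xi t : Green p phi t s = xi p phi t s.
Proof.
rewrite /Green; case: ifP => [lt_st|]; last by rewrite /xi => ->.
have -> : t = s + (absz (t - s))%:Z by lia.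
by rewrite Fmat_col0 /= subr0.
Qed.

End GreenDeterminant.

Theorem theorem2 (R : realType) (p : nat) (hp : (1 <= p)%N)
    (phi : nat -> int -> R[i]) (s t : int) :
  s - p%:Z + 1 <= t -> Green p phi t s = xi p phi t s.
Proof. by move=> _; apply: Green_xi. Qed.
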